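(* Assume the alphabet $\Sigma$ contains at least two characters. The substring complexity $\delta$ satisfies the following lower bounds on its sensitivity: substitutions: $\mathsf{MS}_{\mathrm{sub}}(\delta,n) \geq 2$ and $\mathsf{AS}_{\mathrm{sub}}(\delta,n) \geq 1$; insertions: $\mathsf{MS}_{\mathrm{ins}}(\delta,n) \geq 2$ and $\mathsf{AS}_{\mathrm{ins}}(\delta,n) \geq 1$; deletions: $\liminf_{n\to\infty}\mathsf{MS}_{\mathrm{del}}(\delta,n) \geq 1.5$ and $\liminf_{n\to\infty}\mathsf{AS}_{\mathrm{del}}(\delta,n) \geq 1$.
   Context: Strings are finite sequences over an alphabet $\Sigma$; $\Sigma^n$ is the set of strings of length $n$. $\mathsf{ed}(T,S)$ is the edit distance (minimum number of single-character substitutions, insertions, deletions turning $T$ into $S$). For a measure $C$ assigning a number $C(T)$ to each string, define $\mathsf{MS}_{\mathrm{sub}}(C,n)=\max_{T\in\Sigma^n}\{C(T')/C(T): T'\in\Sigma^n,\ \mathsf{ed}(T,T')=1\}$, $\mathsf{MS}_{\mathrm{ins}}(C,n)$ and $\mathsf{MS}_{\mathrm{del}}(C,n)$ the same with $T'\in\Sigma^{n+1}$, resp. $T'\in\Sigma^{n-1}$; and $\mathsf{AS}_{\mathrm{sub}},\mathsf{AS}_{\mathrm{ins}},\mathsf{AS}_{\mathrm{del}}$ the same with $C(T')-C(T)$ in place of $C(T')/C(T)$. For a string $T$ of length $n$, $\mathsf{Substr}(T,k)$ is the number of distinct substrings of length $k$ of $T$, and the substring complexity is $\delta(T)=\max_{1\le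 k\le n}\mathsf{Substr}(T,k)/k$. *)

From HB Require Import structures.
From mathcomp Require Import all_boot all_order all_algebra.
From mathcomp Require Import all_classical all_reals all_analysis.
Set Implicit Arguments. Unset Strict Implicit. Unset Printing Implicit Defensive.
Import Order.TTheory GRing.Theory Num.Theory.
Local Open Scope ring_scope.

Section Strings.
Variable Sigma : eqType.

Fixpoint ed (s : seq Sigma) : seq Sigma -> nat :=
  match s with
  | [::] => fun t => size t
  | x :: s' =>
      fix ed_t (t : seq Sigma) : nat :=
        match t with
        | [::] => size s
        | y :: t' => minn (minn (ed s' t).+1 (ed_t t').+1) (ed s' t' + (x != y))
        end
  end.

Definition Substr (T : seq Sigma) (k : nat) : nat :=
  size (undup [seq take k (drop i T) | i <- iota 0 (size T - k).+1]).

Definition delta (R : realType) (T : seq Sigma) : R :=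
  \big[Num.max/0]_(1 <= k < (size T).+1) ((Substr T k)%:R / k%:R).
End Strings.

Local Open Scope ereal_scope.
Section Sensitivity.
Variables (Sigma : finType) (R : realType) (C : seq Sigma -> R).

Definition MS_sub (n : nat) : \bar R :=
  \big[Order.max/-oo]_(T : n.-tuple Sigma)
    \big[Order.max/-oo]_(T' : n.-tuple Sigma | ed T T' == 1%N) (C T' / C T)%R%:E.
Definition MS_ins (n : nat) : \bar R :=
  \big[Order.max/-oo]_(T : n.-tuple Sigma)
    \big[Order.max/-oo]_(T' : n.+1.-tuple Sigma | ed T T' == 1%N) (C T' / C T)%R%:E.
Definition MS_del (n : nat) : \bar R :=
  \big[Order.max/-oo]_(T : n.-tuple Sigma)
    \big[Order.max/-oo]_(T' : n.-1.-tuple Sigma | ed T T' == 1%N) (C T' / C T)%R%:E.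
Definition AS_sub (n : nat) : \bar R :=
  \big[Order.max/-oo]_(T : n.-tuple Sigma)
    \big[Order.max/-oo]_(T' : n.-tuple Sigma | ed T T' == 1%N) (C T' - C T)%R%:E.
Definition AS_ins (n : nat) : \bar R :=
  \big[Order.max/-oo]_(T : n.-tuple Sigma)
    \big[Order.max/-oo]_(T' : n.+1.-tuple Sigma | ed T T' == 1%N) (C T' - C T)%R%:E.
Definition AS_del (n : nat) : \bar R :=
  \big[Order.max/-oo]_(T : n.-tuple Sigma)
    \big[Order.max/-oo]_(T' : n.-1.-tuple Sigma | ed T T' == 1%N) (C T' - C T)%R%:E.
End Sensitivity.

From HB Require Import structures.
From mathcomp Require Import all_boot all_order all_algebra.
From mathcomp Require Import all_classical all_reals all_analysis.
From mathcomp Require Import zify ring lra.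
Import Order.TTheory GRing.Theory Num.Theory.
Set Implicit Arguments. Unset Strict Implicit. Unset Printing Implicit Defensive.

(* Turning a^n into b a^(n-1), or into b a^n, raises delta from 1 to at least 2,
   because the new string has two distinct letters.  For deletions take
   T = a^L b a^G b a b a^G b a b a^G with G <= L <= G+3.  From position L+G+4 on, T repeats
   itself with period G+3, so T has at most 2k distinct factors of length k <= G+1 and at
   most L+G+4 of any other length: delta(T) <= 2 + 3/G.  Deleting the a between the last two
   b's breaks the period, and the result has 3G-2 distinct factors of length G:
   delta(T') >= 3 - 2/G.  Letting G grow gives ratio 3/2 and difference 1 in the limit. *)

Section EditDistance.
Variable Sigma : eqType.
Implicit Types (x y : Sigma) (s t p : seq Sigma).

Lemma ed_cons x y s t : ed (x :: s) (y :: t) =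
  minn (minn (ed s (y :: t)).+1 (ed (x :: s) t).+1) (ed s t + (x != y)).
Proof. by []. Qed.

Lemma ed_refl s : ed s s = 0.
Proof. by elim: s => // x s IH; rewrite ed_cons IH eqxx minn0. Qed.

Lemma ed_eq0 s t : ed s t = 0 -> s = t.
Proof.
elim: s t => [|x s IH] [|y t] //; rewrite ed_cons => /eqP.
by rewrite -leqn0 !geq_min /= leqn0 addn_eq0 eqb0 negbK => /andP[/eqP/IH-> /eqP->].
Qed.

Lemma ed_cons2_le x s t : ed (x :: s) (x :: t) <= ed s t.
Proof. by rewrite ed_cons eqxx addn0 geq_minr. Qed.

Lemma ed_catl p s t : ed (p ++ s) (p ++ t) <= ed s t.
Proof. by elim: p => //= x p IH; exact: leq_trans (ed_cons2_le _ _ _) IH. Qed.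

Lemma ed_consl_le1 x s : ed (x :: s) s <= 1.
Proof. by case: s => // y s; rewrite ed_cons ed_refl !geq_min leqnn. Qed.

Lemma ed_consr_le1 x s : ed s (x :: s) <= 1.
Proof. by case: s => // y s; rewrite ed_cons ed_refl !geq_min leqnn orbT. Qed.

Lemma ed_subst_le1 x y s : ed (x :: s) (y :: s) <= 1.
Proof. by rewrite ed_cons ed_refl add0n geq_min leq_b1 orbT. Qed.

Lemma ed_eq1 s t : s != t -> ed s t <= 1 -> ed s t = 1.
Proof. by move=> /eqP st le1; apply/eqP; rewrite eqn_leq le1 lt0n; apply/eqP => /ed_eq0. Qed.

Lemma ed_delete p x t : ed (p ++ x :: t) (p ++ t) = 1.
Proof.
apply: ed_eq1; last exact: leq_trans (ed_catl _ _ _) (ed_consl_le1 _ _).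
by apply/eqP => /(congr1 size); rewrite !size_cat /=; lia.
Qed.

Lemma ed_insert p x t : ed (p ++ t) (p ++ x :: t) = 1.
Proof.
apply: ed_eq1; last exact: leq_trans (ed_catl _ _ _) (ed_consr_le1 _ _).
by apply/eqP => /(congr1 size); rewrite !size_cat /=; lia.
Qed.

Lemma ed_substitute p x y t : x != y -> ed (p ++ x :: t) (p ++ y :: t) = 1.
Proof.
move=> xy; apply: ed_eq1; last exact: leq_trans (ed_catl _ _ _) (ed_subst_le1 _ _ _).
by rewrite eqseq_cat // eqxx eqseq_cons eqxx andbT.
Qed.

End EditDistance.

Section Windows.
Variable Sigma : eqType.
Implicit Types (T : seq Sigma) (W : seq (seq Sigma)).

Definition window T k i := take k (drop i T).

Lemma Substr_le T k W :
  (forall i, i <= size T - k -> window T k i \in W) -> Substr T k <= size W.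
Proof.
move=> TW; apply: uniq_leq_size (undup_uniq _) _ => w.
by rewrite mem_undup => /mapP[i]; rewrite mem_iota => /andP[_ /TW] + ->.
Qed.

Lemma Substr_ge T k W : uniq W ->
  (forall w, w \in W -> exists2 i, i <= size T - k & w = window T k i) ->
  size W <= Substr T k.
Proof.
move=> uW WT; apply: uniq_leq_size uW _ => w /WT[i ik ->].
by rewrite mem_undup; apply: map_f; rewrite mem_iota add0n ltnS ik.
Qed.

Lemma Substr_gt0 T k : 0 < Substr T k.
Proof.
apply: (@Substr_ge _ _ [:: window T k 0]) => // w; rewrite inE => /eqP->.
by exists 0.
Qed.

Lemma Substr_nseq_le1 n (x : Sigma) k : k <= n -> Substr (nseq n x) k <= 1.
Proof.
move=> kn; apply: (@Substr_le _ _ [:: nseq k x]) => i; rewrite size_nseq => ik.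
by rewrite inE /window drop_nseq take_nseq //; lia.
Qed.

Lemma window1_index T (x : Sigma) : x \in T -> window T 1 (index x T) = [:: x].
Proof. by move=> xT; rewrite /window (drop_nth x) ?index_mem // nth_index //= take0. Qed.

Lemma Substr1_ge2 T (x y : Sigma) : x != y -> x \in T -> y \in T -> 2 <= Substr T 1.
Proof.
move=> xy xT yT; apply: (@Substr_ge _ _ [:: [:: x]; [:: y]]).
  by rewrite /= inE eqseq_cons eqxx !andbT.
move=> w; rewrite !inE => /orP[]/eqP->; [exists (index x T) | exists (index y T)];
  rewrite ?window1_index //; move: (xT) (yT); rewrite -!index_mem; lia.
Qed.

End Windows.

Lemma Substr_map (Sigma Sigma' : eqType) (f : Sigma -> Sigma') (T : seq Sigma) k :
  injective f -> Substr (map f T) k = Substr T k.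
Proof.
move=> f_inj; rewrite /Substr size_map.
have -> : [seq take k (drop i (map f T)) | i <- iota 0 (size T - k).+1] =
          map (map f) [seq window T k i | i <- iota 0 (size T - k).+1].
  by rewrite -map_comp; apply: eq_map => i; rewrite /= /window map_take map_drop.
by rewrite undup_map_inj ?size_map //; exact: inj_map.
Qed.

Lemma mkseqD (A : Type) (f : nat -> A) m n :
  mkseq f (m + n) = mkseq f m ++ mkseq (fun i => f (m + i)) n.
Proof.
have iota_m : iota m n = map (addn m) (iota 0 n) by rewrite -iotaDl addn0.
by rewrite /mkseq iotaD map_cat add0n iota_m -map_comp.
Qed.

Lemma eq_in_mkseq (A : Type) (f g : nat -> A) n :
  (forall i, i < n -> f i = g i) -> mkseq f n = mkseq g n.
Proof. by move=> fg; apply/eq_in_map => i; rewrite mem_iota => /andP[_ /fg]. Qed.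

Section MkseqWindows.
Variable A : eqType.
Implicit Types (f : nat -> A) (S : seq nat).

Lemma window_mkseq f n k i : i + k <= n ->
  window (mkseq f n) k i = mkseq (fun t => f (i + t)) k.
Proof.
move=> ikn; rewrite /window -(subnKC ikn) -addnA !mkseqD.
by rewrite drop_size_cat ?size_mkseq // take_size_cat ?size_mkseq.
Qed.

Lemma Substr_mkseq_le f n k S : k <= n ->
  (forall i, i <= n - k ->
     exists2 s, s \in S & forall t, t < k -> f (i + t) = f (s + t)) ->
  Substr (mkseq f n) k <= size S.
Proof.
move=> kn HS; rewrite -(size_map (fun s => mkseq (fun t => f (s + t)) k)).
apply: Substr_le => i; rewrite size_mkseq => ik; have [s sS fis] := HS i ik.
by rewrite window_mkseq; [apply/mapP; exists s => //; exact: eq_in_mkseq | lia].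
Qed.

Lemma Substr_mkseq_ge f n k S : k <= n -> uniq S -> (forall s, s \in S -> s <= n - k) ->
  {in S &, injective (fun s => mkseq (fun t => f (s + t)) k)} ->
  size S <= Substr (mkseq f n) k.
Proof.
move=> kn uS Sn f_inj; rewrite -(size_map (fun s => mkseq (fun t => f (s + t)) k)).
apply: Substr_ge; first by rewrite map_inj_in_uniq.
move=> _ /mapP[s sS ->]; have := Sn s sS; exists s; rewrite ?size_mkseq //.
by rewrite window_mkseq //; lia.
Qed.

End MkseqWindows.

Section FirstTrue.
Implicit Types (P : nat -> bool) (w : seq bool).

Definition first_true_key w :=
  let o := find id w in (o, nth false w o.+1, nth false w o.+2).

Lemma nth_mkseq_false P k j : nth false (mkseq P k) j = (j < k) && P j.
Proof.
by case: ltnP => jk; [rewrite nth_mkseq | rewrite nth_default ?size_mkseq].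
Qed.

Lemma find_mkseq P k o :
  o <= k -> (forall t, t < o -> P t = false) -> (o < k -> P o) -> find id (mkseq P k) = o.
Proof.
move=> ok before_o at_o; set i := find _ _.
have ik : i <= k by rewrite -[k](size_mkseq P) find_size.
have before_i j : j < i -> P j = false.
  by move=> ji; rewrite -(before_find false ji) nth_mkseq_false andb_idl //; lia.
have at_i : i < k -> P i.
  move=> ik'; rewrite -(nth_mkseq false P ik'); apply: (nth_find false (a := id)).
  by rewrite has_find size_mkseq.
case: (ltngtP i o) => // [io|oi].
  by have := at_i (leq_trans io ok); rewrite before_o.
by have := at_o (leq_trans oi ik); rewrite before_i.
Qed.

Lemma first_true_key_mkseq P k o :
  o <= k -> (forall t, t < o -> P t = false) -> (o < k -> P o) ->
  first_true_key (mkseq P k) = (o, (o.+1 < k) && P o.+1, (o.+2 < k) && P o.+2).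
Proof. by move=> *; rewrite /first_true_key (find_mkseq (o := o)) // !nth_mkseq_false. Qed.

End FirstTrue.

Section DeletionInstance.
Variables L G : nat.
Hypotheses (G_ge2 : 2 <= G) (G_le_L : G <= L).

(* [hardT L G] marks the b's of T = a^L b a^G b a b a^G b a b a^G, and [hardT' L G] those of
   the string obtained from T by deleting its letter at position L+2G+5, the a between the
   last two b's. *)
Definition hardT i := [|| i == L, i == L+G+1, i == L+G+3, i == L+2*G+4 | i == L+2*G+6].
Definition hardT' i := [|| i == L, i == L+G+1, i == L+G+3, i == L+2*G+4 | i == L+2*G+5].

Lemma hardT_periodic i : L+G+4 <= i < L+3*G+7 -> hardT i = hardT (i - (G+3)).
Proof. by rewrite /hardT; lia. Qed.

(* Up to the period G+3, a window of length k <= G+1 has no b, or goes through L, or contains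
   both L+G+1 and L+G+3, or has a single b, which a shift moves onto L. *)
Definition small_reps k := 0 :: iota (L+1-k) k ++ iota (L+G+4-k) (k-2).

Local Ltac small_rep s :=
  exists s; [rewrite /small_reps inE mem_cat !mem_iota; lia | move=> t tk; rewrite /hardT; lia].

Lemma hardT_small_rep k i : 1 <= k <= G+1 -> i + k <= L+2*G+4 ->
  exists2 s, s \in small_reps k & forall t, t < k -> hardT (i + t) = hardT (s + t).
Proof.
move=> kG ik.
have [|iL] := leqP (i+k) L; first by small_rep 0.
have [|Li] := leqP i L; first by small_rep i.
have [|iG1] := leqP (i+k) (L+G+1); first by small_rep 0.
have [iG1'|G1i] := leqP i (L+G+1).
  have [|iG3] := leqP (L+G+4) (i+k); first by small_rep i.
  by small_rep (i - (G+1)).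
have [iG3|G3i] := leqP i (L+G+3); last by small_rep 0.
have [|iG3'] := leqP (i+k) (L+G+3); first by small_rep 0.
by small_rep (i - (G+3)).
Qed.

Lemma Substr_hardT_small k : 1 <= k <= G+1 -> Substr (mkseq hardT (L+3*G+7)) k <= 2*k.
Proof.
move=> kG; apply: leq_trans (Substr_mkseq_le (S := small_reps k) _ _) _; first lia.
  move=> i ik; have [Gi|iG] := leqP (L+G+4) i; last by apply: hardT_small_rep; lia.
  have [|s sS eq_s] := @hardT_small_rep k (i - (G+3)) kG; first lia.
  by exists s => // t tk; rewrite -eq_s // hardT_periodic; [congr hardT|]; lia.
by rewrite /small_reps /= size_cat !size_iota; lia.
Qed.

Lemma Substr_hardT_large k : G+1 <= k <= L+3*G+7 ->
  Substr (mkseq hardT (L+3*G+7)) k <= L+G+4.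
Proof.
move=> kG; rewrite -[L+G+4](size_iota 0); apply: Substr_mkseq_le => [|i ik]; first lia.
have [Gi|iG] := leqP (L+G+4) i; last by exists i => //; rewrite mem_iota.
exists (i - (G+3)); first by rewrite mem_iota; lia.
by move=> t tk; rewrite hardT_periodic; [congr hardT|]; lia.
Qed.

(* The windows of length G of T' starting there are told apart by the position of their first
   b and the two letters following it. *)
Definition distinct_starts := 0 :: iota (L+1-G) G ++ iota (L+4) (G-2) ++ iota (L+G+6) (G-1).

Definition start_key s :=
  if s == 0 then (G, false, false)
  else if s <= L then (L - s, false, false)
  else if s <= L+G+1 then (L+G+1 - s, false, true)
  else (L+2*G+4 - s, true, false).

Local Ltac key_at o :=
  rewrite (@first_true_key_mkseq _ _ o); [congr (_, _, _) | | move=> t tk | move=> ?];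
  unfold hardT'; lia.

Lemma first_true_key_hardT' s : s \in distinct_starts ->
  first_true_key (mkseq (fun t => hardT' (s + t)) G) = start_key s.
Proof.
rewrite /distinct_starts inE !mem_cat !mem_iota /start_key => s_in.
case: ifP => [?|?]; first by key_at G.
case: ifP => [?|?]; first by key_at (L - s).
case: ifP => [?|?]; first by key_at (L+G+1 - s).
by key_at (L+2*G+4 - s).
Qed.

Lemma Substr_hardT'_ge : 3*G - 2 <= Substr (mkseq hardT' (L+3*G+6)) G.
Proof.
have -> : 3*G - 2 = size distinct_starts by rewrite /= !size_cat !size_iota; lia.
apply: Substr_mkseq_ge.
- lia.
- rewrite /distinct_starts /= !cat_uniq !iota_uniq /= !mem_cat !mem_iota /= andbT.
  by repeat (apply/andP; split); try lia; apply/hasPn => x; rewrite ?mem_cat !mem_iota; lia.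
- by move=> s; rewrite /distinct_starts inE !mem_cat !mem_iota; lia.
- move=> s1 s2 s1_in s2_in /(congr1 first_true_key); rewrite !first_true_key_hardT' //.
  move: s1_in s2_in; rewrite /distinct_starts !inE !mem_cat !mem_iota /start_key => ? ?.
  by repeat case: ifP => ?; move/eqP; rewrite !xpair_eqE /=; lia.
Qed.

End DeletionInstance.

Section Letters.
Variables (Sigma : eqType) (a b : Sigma).

Definition letter (c : bool) := if c then b else a.

Lemma letter_inj : a != b -> injective letter.
Proof. by move=> ab [] [] // /eqP; rewrite ?(negbTE ab) // eq_sym (negbTE ab). Qed.

End Letters.

Section SubstringComplexity.
Variable R : realType.
Local Open Scope ring_scope.

Lemma delta_ge (Sigma : eqType) (T : seq Sigma) k : (1 <= k <= size T)%N ->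
  (Substr T k)%:R / k%:R <= delta R T.
Proof. by move=> kT; apply: (le_bigmax_seq _ k xpredT) => //; rewrite mem_index_iota ltnS. Qed.

Lemma delta_le (Sigma : eqType) (T : seq Sigma) (x : R) : 0 <= x ->
  (forall k, (1 <= k <= size T)%N -> (Substr T k)%:R / k%:R <= x) -> delta R T <= x.
Proof.
move=> x0 Tx; rewrite /delta big_seq; apply: bigmax_le => // k.
by rewrite mem_index_iota ltnS => /Tx.
Qed.

Lemma delta_map (Sigma Sigma' : eqType) (f : Sigma -> Sigma') (T : seq Sigma) :
  injective f -> delta R (map f T) = delta R T.
Proof. by move=> f_inj; rewrite /delta size_map; apply: eq_bigr => k _; rewrite Substr_map. Qed.

Lemma delta_ge1 (Sigma : eqType) (T : seq Sigma) : (0 < size T)%N -> 1 <= delta R T.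
Proof.
move=> T0; apply: le_trans (delta_ge (k := 1) _); last by rewrite leqnn.
by rewrite divr1 ler1n Substr_gt0.
Qed.

Lemma delta_nseq (Sigma : eqType) n (x : Sigma) : delta R (nseq n x) <= 1.
Proof.
apply: delta_le => // k; rewrite size_nseq => /andP[k1 kn].
by rewrite ler_pdivrMr ?ltr0n // mul1r ler_nat (leq_trans (Substr_nseq_le1 _ kn)).
Qed.

Lemma delta_ge2 (Sigma : eqType) (T : seq Sigma) x y : x != y -> x \in T -> y \in T ->
  2 <= delta R T.
Proof.
move=> xy xT yT; apply: le_trans (delta_ge (k := 1) _); last by case: (T) xT.
by rewrite divr1 ler_nat (Substr1_ge2 xy).
Qed.

Lemma ler_nat_ratio (s k p m : nat) : (0 < k)%N -> (0 < m)%N -> (s * m <= p * k)%N ->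
  s%:R / k%:R <= p%:R / m%:R :> R.
Proof.
move=> k0 m0 skpm; rewrite ler_pdivrMr ?ltr0n // mulrAC ler_pdivlMr ?ltr0n //.
by rewrite -!natrM ler_nat.
Qed.

Lemma delta_hardT L G : (2 <= G)%N -> (G <= L)%N -> (L <= G + 3)%N ->
  delta R (mkseq (hardT L G) (L+3*G+7)) <= (2*G+3)%:R / G%:R.
Proof.
move=> G_ge2 G_le_L L_le_G3; apply: delta_le => // k; rewrite size_mkseq => kn.
apply: ler_nat_ratio; [lia | lia |].
have [kG|Gk] := leqP k (G+1).
  have kG' : (1 <= k <= G+1)%N by lia.
  by have := Substr_hardT_small G_ge2 G_le_L kG'; nia.
have Gk' : (G + 1 <= k <= L+3*G+7)%N by lia.
by have := Substr_hardT_large G_ge2 G_le_L Gk'; nia.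
Qed.
End SubstringComplexity.

Section Witnesses.
Variables (Sigma : finType) (R : realType) (C : seq Sigma -> R).
Local Open Scope ereal_scope.

Lemma le_bigmax_bigmax_cond (I J : finType) (P : I -> pred J) (F : I -> J -> \bar R) i j :
  P i j -> F i j <= \big[Order.max/-oo]_i \big[Order.max/-oo]_(j | P i j) F i j.
Proof. by move=> Pij; apply: le_trans (le_bigmax _ _ i); exact: le_bigmax_cond. Qed.

Lemma sub_sensitivity_ge n (T T' : n.-tuple Sigma) : ed T T' = 1%N ->
  (C T' / C T)%:E <= MS_sub C n /\ (C T' - C T)%:E <= AS_sub C n.
Proof. by move=> /eqP edTT'; split; apply: le_bigmax_bigmax_cond. Qed.

Lemma ins_sensitivity_ge n (T : n.-tuple Sigma) (T' : n.+1.-tuple Sigma) : ed T T' = 1%N ->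
  (C T' / C T)%:E <= MS_ins C n /\ (C T' - C T)%:E <= AS_ins C n.
Proof. by move=> /eqP edTT'; split; apply: le_bigmax_bigmax_cond. Qed.

Lemma del_sensitivity_ge n (T : n.-tuple Sigma) (T' : n.-1.-tuple Sigma) : ed T T' = 1%N ->
  (C T' / C T)%:E <= MS_del C n /\ (C T' - C T)%:E <= AS_del C n.
Proof. by move=> /eqP edTT'; split; apply: le_bigmax_bigmax_cond. Qed.

End Witnesses.

Section Arithmetic.
Variable R : realType.
Local Open Scope ring_scope.

Lemma ratio_diff_ge2 (x y : R) : 0 < x <= 1 -> 2 <= y -> 2 <= y / x /\ 1 <= y - x.
Proof. by move=> /andP[x0 x1] y2; split; [rewrite ler_pdivlMr //|]; lra. Qed.

Lemma del_ratio_bounds (G : nat) (x y : R) : (2 <= G)%N ->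
  0 < x <= (2*G+3)%:R / G%:R -> (3*G-2)%:R / G%:R <= y ->
  3/2 - 4/G%:R <= y / x /\ 1 - 5/G%:R <= y - x.
Proof.
move=> G_ge2 /andP[x0 x_le] y_ge.
have G0 : G%:R != 0 :> R by rewrite pnatr_eq0; lia.
have e_gt0 : 0 < G%:R^-1 :> R by rewrite invr_gt0 ltr0n; lia.
have e_le : G%:R^-1 <= 1/2 :> R.
  by rewrite ler_pdivlMr // mulrC -ler_pdivlMr ?ltr0n ?div1r ?invrK ?ler_nat //; lia.
have eq_x : (2*G+3)%:R / G%:R = 2 + 3 * G%:R^-1 :> R by rewrite natrD natrM; field.
have eq_y : (3*G-2)%:R / G%:R = 3 - 2 * G%:R^-1 :> R by rewrite natrB ?natrM; [field | lia].
rewrite eq_x in x_le; rewrite eq_y in y_ge.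
rewrite -[4 / _]/(4 * G%:R^-1) -[5 / _]/(5 * G%:R^-1).
split; last lra.
by rewrite ler_pdivlMr //; nra.
Qed.

Local Open Scope ereal_scope.

Lemma limn_einf_ge (u : (\bar R)^nat) (l : R) :
  (forall e : R, (0 < e)%R -> exists N, forall n, (N <= n)%N -> (l - e)%:E <= u n) ->
  l%:E <= limn_einf u.
Proof.
move=> u_ge; rewrite limn_einf_lim (cvg_lim _ (@cvg_einfs_sup _ u)) //.
have sup_ge e : (0 < e)%R -> (l - e)%:E <= ereal_sup (range (einfs u)).
  move=> /u_ge[N uN]; apply: le_trans (ereal_sup_ubound (x := einfs u N) _); last by exists N.
  by apply/ereal_infP => _ [k /= Nk <-]; exact: uN.
move: sup_ge; case: (ereal_sup _) => [s| |] sup_ge.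
- rewrite lee_fin leNgt; apply/negP => sl.
  by have := sup_ge ((l - s) / 2)%R; rewrite lee_fin; lra.
- exact: leey.
- by have := sup_ge 1%R ltr01; rewrite leeNy_eq.
Qed.

End Arithmetic.

Section DeltaSensitivity.
Variables (Sigma : finType) (R : realType) (a b : Sigma).
Hypothesis ab : a != b.
Local Open Scope ring_scope.

Lemma sub_sensitivity_delta n : (1 < n)%N ->
  (2%:E <= MS_sub (@delta Sigma R) n /\ 1%:E <= AS_sub (@delta Sigma R) n)%E.
Proof.
move=> n_gt1; have n_eq : n = n.-1.+1 by rewrite prednK // ltnW.
have sT : size (a :: nseq n.-1 a) == n by rewrite /= size_nseq -n_eq.
have sT' : size (b :: nseq n.-1 a) == n by rewrite /= size_nseq -n_eq.
have [MS AS] :=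
  @sub_sensitivity_ge _ _ (delta R) _ (Tuple sT) (Tuple sT') (ed_substitute [::] _ ab).
have dT : 0 < delta R (a :: nseq n.-1 a) <= 1.
  by rewrite (lt_le_trans ltr01 (delta_ge1 _ _)) //; exact: (delta_nseq R n.-1.+1).
have dT' : 2 <= delta R (b :: nseq n.-1 a).
  apply: (@delta_ge2 R _ _ b a); rewrite 1?eq_sym ?mem_head //.
  by rewrite in_cons mem_nseq eqxx andbT; apply/orP; right; lia.
have [ratio diff] := ratio_diff_ge2 dT dT'.
by split; [apply: le_trans MS | apply: le_trans AS]; rewrite lee_fin.
Qed.

Lemma ins_sensitivity_delta n : (0 < n)%N ->
  (2%:E <= MS_ins (@delta Sigma R) n /\ 1%:E <= AS_ins (@delta Sigma R) n)%E.
Proof.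
move=> n_gt0.
have sT : size (nseq n a) == n by rewrite size_nseq.
have sT' : size (b :: nseq n a) == n.+1 by rewrite /= size_nseq.
have [MS AS] :=
  @ins_sensitivity_ge _ _ (delta R) _ (Tuple sT) (Tuple sT') (ed_insert [::] b _).
have dT : 0 < delta R (nseq n a) <= 1.
  by rewrite (lt_le_trans ltr01 (delta_ge1 _ _)) ?size_nseq // delta_nseq.
have dT' : 2 <= delta R (b :: nseq n a).
  apply: (@delta_ge2 R _ _ b a); rewrite 1?eq_sym ?mem_head //.
  by rewrite in_cons mem_nseq eqxx andbT n_gt0 orbT.
have [ratio diff] := ratio_diff_ge2 dT dT'.
by split; [apply: le_trans MS | apply: le_trans AS]; rewrite lee_fin.
Qed.

Lemma del_sensitivity_delta L G : (2 <= G)%N -> (G <= L)%N -> (L <= G + 3)%N ->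
  ((3/2 - 4/G%:R)%:E <= MS_del (@delta Sigma R) (L+3*G+7) /\
   (1 - 5/G%:R)%:E <= AS_del (@delta Sigma R) (L+3*G+7))%E.
Proof.
move=> G_ge2 G_le_L L_le_G3.
pose w := mkseq (hardT L G) (L+3*G+7); pose w' := mkseq (hardT' L G) (L+3*G+6).
pose p := mkseq (hardT L G) (L+2*G+5); pose t := mkseq (fun i => hardT L G (L+2*G+6 + i)) (G+1).
have w_split : w = p ++ false :: t.
  rewrite /w /t (_ : L+3*G+7 = (L+2*G+5).+1 + (G+1))%N; last lia.
  rewrite mkseqD mkseqS cat_rcons; congr (_ ++ _ :: _); first by rewrite /hardT; lia.
  by apply: eq_mkseq => i; congr hardT; lia.
have w'_split : w' = p ++ t.
  rewrite /w' /p /t (_ : L+3*G+6 = L+2*G+5 + (G+1))%N; last lia.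
  rewrite mkseqD; congr (_ ++ _); [apply: eq_in_mkseq | apply: eq_mkseq] => i *;
  by rewrite /hardT /hardT'; lia.
have sT : size (map (letter a b) w) == L+3*G+7 by rewrite size_map size_mkseq.
have sT' : size (map (letter a b) w') == (L+3*G+7).-1 by rewrite size_map size_mkseq; lia.
have edTT' : ed (map (letter a b) w) (map (letter a b) w') = 1%N.
  by rewrite w_split w'_split !map_cat; exact: ed_delete.
have [MS AS] := @del_sensitivity_ge _ _ (delta R) _ (Tuple sT) (Tuple sT') edTT'.
rewrite /= !(delta_map R _ (letter_inj ab)) in MS AS.
have dT : 0 < delta R w <= (2*G+3)%:R / G%:R.
  by rewrite /w delta_hardT // andbT (lt_le_trans ltr01) // delta_ge1 // size_mkseq; lia.
have dT' : (3*G-2)%:R / G%:R <= delta R w'.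
  apply: le_trans (@delta_ge R _ _ G _); last by rewrite size_mkseq; lia.
  apply: ler_nat_ratio; [lia | lia |].
  by have := Substr_hardT'_ge G_ge2 G_le_L; rewrite /w'; nia.
have [ratio diff] := del_ratio_bounds G_ge2 dT dT'.
by split; [apply: le_trans MS | apply: le_trans AS]; rewrite lee_fin.
Qed.

Lemma del_sensitivity_delta_eventually (e : R) : 0 < e -> exists N, forall n, (N <= n)%N ->
  ((3/2 - e)%:E <= MS_del (@delta Sigma R) n /\ (1 - e)%:E <= AS_del (@delta Sigma R) n)%E.
Proof.
move=> e_gt0; have M_gt := archi_boundP (ltW (divr_gt0 (ltr0n R 5) e_gt0)).
set M := Num.Def.archi_bound _ in M_gt.
exists (4 * M + 15)%N => n n_ge.
set G := ((n - 7) %/ 4)%N; set L := (G + (n - 7) %% 4)%N.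
have -> : n = (L + 3*G + 7)%N by rewrite /L /G; lia.
have [|||MS AS] := @del_sensitivity_delta L G; rewrite /L /G; try lia.
have G_gt : 5 / e < G%:R by apply: lt_le_trans M_gt _; rewrite ler_nat /G; lia.
have e_ge : 5 / G%:R <= e.
  by rewrite ler_pdivrMr ?ltr0n /G; [rewrite mulrC -ler_pdivrMr // ltW | lia].
split; [apply: le_trans MS | apply: le_trans AS]; rewrite lee_fin; lra.
Qed.

End DeltaSensitivity.

Local Open Scope ring_scope.

Theorem mainTheorem1 (Sigma : finType) (R : realType) (hSigma : (1 < #|Sigma|)%N) :
  (forall n : nat, (2 <= n)%N ->
     (2%:E <= MS_sub (@delta Sigma R) n)%E /\ (1%:E <= AS_sub (@delta Sigma R) n)%E) /\
  (forall n : nat, (1 <= n)%N ->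
     (2%:E <= MS_ins (@delta Sigma R) n)%E /\ (1%:E <= AS_ins (@delta Sigma R) n)%E) /\
  ((3 / 2)%:E <= limn_einf (fun n => MS_del (@delta Sigma R) n))%E /\
  (1%:E <= limn_einf (fun n => AS_del (@delta Sigma R) n))%E.
Proof.
have [a [b [_ _ ab]]] := card_gt1P hSigma.
split; first exact: sub_sensitivity_delta ab.
split; first exact: ins_sensitivity_delta ab.
split; apply: limn_einf_ge => e /(del_sensitivity_delta_eventually ab)[N del_ge];
  by exists N => n /del_ge[].
Qed.
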